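(* Define $Q(0)=0$, $Q(1)=1$, $Q(n)=b(n)Q(n-1)+Q(n-2)$ for $n\ge2$, where $b(n)=2n/3$ if $3\mid n$ and $b(n)=1$ if $3\nmid n$. For every integer $M>0$, the sequence $(Q(n)\bmod M)_{n\ge0}$ is periodic, with period at most $3M^3$.
   Context: $Q(n)$ is the denominator of the $n$th convergent of the simple continued fraction of $e$. *)

From mathcomp Require Import all_boot.
Set Implicit Arguments. Unset Strict Implicit. Unset Printing Implicit Defensive.

Definition b (n : nat) : nat := if 3 %| n then (2 * n) %/ 3 else 1.

(* QQ n = (Q n, Q (n+1)) *)
Fixpoint QQ (n : nat) : nat * nat :=
  match n with
  | 0 => (0, 1)
  | m.+1 => let: (q0, q1) := QQ m in (q1, b m.+2 * q1 + q0)
  end.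

Definition Q (n : nat) : nat := (QQ n).1.

Lemma Q0 : Q 0 = 0. Proof. by []. Qed.
Lemma Q1 : Q 1 = 1. Proof. by []. Qed.
Lemma QS n : Q n.+2 = b n.+2 * Q n.+1 + Q n.
Proof. by rewrite /Q /=; case: (QQ n). Qed.

From mathcomp Require Import all_boot.

Set Implicit Arguments.
Unset Strict Implicit.
Unset Printing Implicit Defensive.

(* Modulo M, the pair (Q n, Q n.+1) together with n mod 3M evolves by a map
   that is invertible: b n mod M only depends on n mod 3M, and the recurrence
   Q n.+2 = b n.+2 * Q n.+1 + Q n can be solved for Q n.  A deterministic
   reversible dynamics on a finite set of 3M^3 states is purely periodic, with
   period at most the number of states (pigeonhole, then run backwards). *)

Section ReversibleOrbit.

Variables (T : finType) (s : nat -> T).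
Hypothesis s_step : forall m n, s m = s n -> s m.+1 = s n.+1.
Hypothesis s_unstep : forall m n, s m.+1 = s n.+1 -> s m = s n.

Lemma orbit_repeat : exists i j, [/\ i < j, j <= #|T| & s i = s j].
Proof.
pose f (i : 'I_#|T|.+1) := s i.
have /injectivePn[x [y neq_xy fxy]] : ~~ injectiveb f.
  apply/injectiveP => /leq_card; by rewrite card_ord ltnn.
have le_T (z : 'I_#|T|.+1) : z <= #|T| by rewrite -ltnS.
case: (ltngtP x y) => [lt_xy|lt_yx|eq_xy]; first by exists x, y.
  by exists y, x.
by case/eqP: neq_xy; apply: val_inj.
Qed.

Lemma orbit_shift k m n : s m = s n -> s (m + k) = s (n + k).
Proof. by elim: k => [|k IH] e; rewrite ?addn0 // !addnS; apply/s_step/IH. Qed.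

Lemma orbit_unshift k m n : s (m + k) = s (n + k) -> s m = s n.
Proof. by elim: k => [|k IH]; rewrite ?addn0 // !addnS => /s_unstep/IH. Qed.

Lemma orbit_periodic : exists p, [/\ 0 < p, p <= #|T| & forall n, s (n + p) = s n].
Proof.
have [i [j [lt_ij le_jT sij]]] := orbit_repeat.
exists (j - i); split; first by rewrite subn_gt0.
  exact: leq_trans (leq_subr i j) le_jT.
have s0 : s (j - i) = s 0.
  by apply: (@orbit_unshift i); rewrite subnK ?add0n // ltnW.
by move=> n; rewrite addnC; have := orbit_shift n s0; rewrite add0n.
Qed.

End ReversibleOrbit.

Lemma b_mod M m n : m = n %[mod 3 * M] -> b m = b n %[mod M].
Proof.
move=> emn.
have emn3 : m = n %[mod 3].
  by rewrite -(modn_dvdm m (dvdn_mulr M (dvdnn 3))) emn modn_dvdm // dvdn_mulr.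
have dvd3 : (3 %| m) = (3 %| n) by rewrite /dvdn emn3.
rewrite /b dvd3; case: ifP => // n3.
have m3 : 3 %| m by rewrite dvd3.
move: emn; rewrite -(divnK m3) -(divnK n3) !mulnA !mulnK // ![_ * 3]mulnC.
rewrite -!muln_modr => /eqP; rewrite eqn_pmul2l // => /eqP emn.
by rewrite -modnMmr emn modnMmr.
Qed.

Section QModM.

Variables (M : nat) (M_gt0 : 0 < M).

Let M3_gt0 : 0 < 3 * M. Proof. by rewrite muln_gt0. Qed.

Definition Qstate (n : nat) : 'I_(3 * M) * 'I_M * 'I_M :=
  (Ordinal (ltn_pmod n M3_gt0), Ordinal (ltn_pmod (Q n) M_gt0),
   Ordinal (ltn_pmod (Q n.+1) M_gt0)).

Lemma QstateP m n : Qstate m = Qstate n <->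
  [/\ m = n %[mod 3 * M], Q m = Q n %[mod M] & Q m.+1 = Q n.+1 %[mod M]].
Proof.
split=> [[e1 e2 e3] // | [e1 e2 e3]].
by rewrite /Qstate; congr (_, _, _); apply: val_inj.
Qed.

Lemma Qstate_step m n : Qstate m = Qstate n -> Qstate m.+1 = Qstate n.+1.
Proof.
move=> /QstateP[e1 e2 e3]; apply/QstateP; split => //.
  by apply/eqP; rewrite -(addn1 m) -(addn1 n) eqn_modDr e1.
have eb : b m.+2 = b n.+2 %[mod M].
  by apply/b_mod/eqP; rewrite -(addn2 m) -(addn2 n) eqn_modDr e1.
by rewrite !QS -modnDm -modnMm eb e3 e2 modnMm modnDm.
Qed.

Lemma Qstate_unstep m n : Qstate m.+1 = Qstate n.+1 -> Qstate m = Qstate n.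
Proof.
move=> /QstateP[e1 e2 e3].
have e0 : m = n %[mod 3 * M] by apply/eqP; rewrite -(eqn_modDr 1) !addn1 e1.
apply/QstateP; split => //.
have eb : b m.+2 = b n.+2 %[mod M].
  by apply/b_mod/eqP; rewrite -(addn2 m) -(addn2 n) eqn_modDr e0.
move: e3; rewrite !QS => /eqP.
by rewrite -modnDml -modnMm eb e2 modnMm modnDml eqn_modDl => /eqP.
Qed.

Lemma card_Qstate : #|{: 'I_(3 * M) * 'I_M * 'I_M}| = 3 * M ^ 3.
Proof. by rewrite !card_prod !card_ord -!mulnA !expnS expn0 muln1. Qed.

End QModM.

Theorem propositionA6 (M : nat) : 0 < M ->
  exists p : nat, 0 < p /\ p <= 3 * M ^ 3 /\
    forall n : nat, Q (n + p) %% M = Q n %% M.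
Proof.
move=> M_gt0.
have [p [p_gt0 le_p per]] :=
  orbit_periodic (@Qstate_step _ M_gt0) (@Qstate_unstep _ M_gt0).
exists p; rewrite -(card_Qstate M); split=> //; split=> // n.
by have /QstateP[] := per n.
Qed.
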